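(* Let $\Gamma$ be a finite, compact, connected, bipartite metric graph with first Betti number $\beta$, and let $B\subset\partial\Gamma$ be nonempty. Then $$\dim\ker L^{\rm st,D}(\Gamma,B)=0\qquad\text{and}\qquad\dim\ker L^{\rm a/st,N}(\Gamma,B)=\beta+|B|-1.$$
   Context: A finite compact metric graph $\Gamma$ consists of finitely many edges $e_n=[x_{2n-1},x_{2n}]\subset\mathbb R$, $n=1,\dots,E$, of positive lengths and a vertex set $\mathcal V=\{v_1,\dots,v_V\}$ which is a partition of the set of all edge endpoints; the degree of a vertex is the number of endpoints it contains (loops count twice); $\partial\Gamma$ is the set of vertices of degree one; $\beta=E-V+1$. $\Gamma$ is bipartite if $\mathcal V=\mathcal V_1\sqcup\mathcal V_2$ with every edge having one endpoint in a vertex of $\mathcal V_1$ and the other in a vertex of $\mathcal V_2$. $f(x_j)$ denotes the limit of $f$ at endpoint $x_j$, and $\partial f(x_j)=f'(x_j)$ if $x_j$ is a left endpoint, $-f'(x_j)$ if a right endpoint. $L^{\rm st,D}(\Gamma,B)$ acts as $-f''$ on each edge with domain all $f\in W^2_2(\Gamma\setminus\mathcal V)=\bigoplus_nW^2_2(e_n)$ satisfying $f=0$ at each vertex of $B$ and standard conditions ($f(x_i)=f(x_j)$ for $x_i,x_j\in v$, $\sum_{x_j\in v}\partial f(x_j)=0$) at all other vertices $v$. $L^{\rm a/st,N}(\Gamma,B)$ acts as $-f''$ with domain all $f\in W^2_2(\Gamma\setminus\mathcal V)$ satisfying $\partial f=0$ at each vertex of $B$ and anti-standard conditions ($\sum_{x_j\in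 v}f(x_j)=0$, $\partial f(x_i)=\partial f(x_j)$ for $x_i,x_j\in v$) at all other vertices $v$. *)

From Stdlib Require Import Reals List Arith Lia ZArith.
Import ListNotations.
Open Scope R_scope.

(* Edge n (0 <= n < E) is the interval [a n, b n] with a n < b n.
   Endpoints are numbered 0 .. 2E-1: endpoint 2n is the left endpoint a n
   of edge n, endpoint 2n+1 is the right endpoint b n.
   vtx j (< V) is the vertex containing endpoint j; the vertex set is the
   partition of endpoints given by the fibres of vtx. *)

Definition is_metric_graph (E V : nat) (a b : nat -> R) (vtx : nat -> nat) : Prop :=
  (forall n, (n < E)%nat -> a n < b n) /\
  (forall j, (j < 2 * E)%nat -> (vtx j < V)%nat) /\
  (forall v, (v < V)%nat -> exists j, (j < 2 * E)%nat /\ vtx j = v).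

Definition endpoints_of (E : nat) (vtx : nat -> nat) (v : nat) : list nat :=
  filter (fun j => Nat.eqb (vtx j) v) (seq 0 (2 * E)).

Definition degree (E : nat) (vtx : nat -> nat) (v : nat) : nat :=
  length (endpoints_of E vtx v).

Inductive reach (E : nat) (vtx : nat -> nat) (u : nat) : nat -> Prop :=
| reach_refl : reach E vtx u u
| reach_step : forall w x n, reach E vtx u w -> (n < E)%nat ->
    ((vtx (2 * n)%nat = w /\ vtx (2 * n + 1)%nat = x) \/
     (vtx (2 * n + 1)%nat = w /\ vtx (2 * n)%nat = x)) ->
    reach E vtx u x.

Definition connected (E V : nat) (vtx : nat -> nat) : Prop :=
  forall u v, (u < V)%nat -> (v < V)%nat -> reach E vtx u v.

Definition bipartite (E : nat) (vtx : nat -> nat) : Prop :=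
  exists col : nat -> bool, forall n, (n < E)%nat ->
    col (vtx (2 * n)%nat) <> col (vtx (2 * n + 1)%nat).

Definition betti (E V : nat) : Z := (Z.of_nat E - Z.of_nat V + 1)%Z.

(* B is given by a boolean indicator on vertex indices *)
Definition card_B (V : nat) (B : nat -> bool) : nat :=
  length (filter B (seq 0 V)).

(* A function on Gamma is a family f n : R -> R (only its restriction to
   the edge [a n, b n] matters). Elements of the kernel of -d^2/dx^2 on
   W^2_2(e_n) are exactly the affine functions on e_n, i.e. restrictions of
   globally twice-differentiable functions with f'' = 0 on the open edge.
   df n is the derivative of f n. *)
Definition edge_harmonic (a b : R) (g dg : R -> R) : Prop :=
  (forall x, derivable_pt_lim g x (dg x)) /\
  (forall x, exists d2, derivable_pt_lim dg x d2) /\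
  (forall x, a < x < b -> derivable_pt_lim dg x 0).

(* value f(x_j) and normal derivative (partial f)(x_j) at endpoint j *)
Definition endval (a b : nat -> R) (f : nat -> R -> R) (j : nat) : R :=
  if Nat.even j then f (Nat.div2 j) (a (Nat.div2 j))
  else f (Nat.div2 j) (b (Nat.div2 j)).

Definition endder (a b : nat -> R) (df : nat -> R -> R) (j : nat) : R :=
  if Nat.even j then df (Nat.div2 j) (a (Nat.div2 j))
  else - df (Nat.div2 j) (b (Nat.div2 j)).

Definition sumR (l : list nat) (F : nat -> R) : R :=
  fold_right Rplus 0 (map F l).

Definition ker_stD (E V : nat) (a b : nat -> R) (vtx : nat -> nat)
    (B : nat -> bool) (f : nat -> R -> R) : Prop :=
  exists df : nat -> R -> R,
    (forall n, (n < E)%nat -> edge_harmonic (a n) (b n) (f n) (df n)) /\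
    (forall v, (v < V)%nat ->
      if B v then
        (forall j, In j (endpoints_of E vtx v) -> endval a b f j = 0)
      else
        ((forall i j, In i (endpoints_of E vtx v) -> In j (endpoints_of E vtx v) ->
            endval a b f i = endval a b f j) /\
         sumR (endpoints_of E vtx v) (endder a b df) = 0)).

Definition ker_astN (E V : nat) (a b : nat -> R) (vtx : nat -> nat)
    (B : nat -> bool) (f : nat -> R -> R) : Prop :=
  exists df : nat -> R -> R,
    (forall n, (n < E)%nat -> edge_harmonic (a n) (b n) (f n) (df n)) /\
    (forall v, (v < V)%nat ->
      if B v then
        (forall j, In j (endpoints_of E vtx v) -> endder a b df j = 0)
      else
        (sumR (endpoints_of E vtx v) (endval a b f) = 0 /\
         (forall i j, In i (endpoints_of E vtx v) -> In j (endpoints_of E vtx v) ->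
            endder a b df i = endder a b df j))).

(* equality as elements of L^2(Gamma) = (+)_n L^2(e_n) for functions
   continuous on the closed edges *)
Definition eq_on_edges (E : nat) (a b : nat -> R) (f g : nat -> R -> R) : Prop :=
  forall n x, (n < E)%nat -> a n <= x <= b n -> f n x = g n x.

Definition lincomb (d : nat) (c : nat -> R) (bs : nat -> nat -> R -> R) : nat -> R -> R :=
  fun n x => sumR (seq 0 d) (fun i => c i * bs i n x).

Definition has_dim (E : nat) (a b : nat -> R) (K : (nat -> R -> R) -> Prop) (d : nat) : Prop :=
  exists bs : nat -> nat -> R -> R,
    (forall i, (i < d)%nat -> K (bs i)) /\
    (forall f, K f -> exists c : nat -> R, eq_on_edges E a b f (lincomb d c bs)) /\
    (forall c : nat -> R, eq_on_edges E a b (lincomb d c bs) (fun _ _ => 0) ->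
        forall i, (i < d)%nat -> c i = 0).

From Stdlib Require Import Reals List Arith ZArith.
Open Scope R_scope.
From Stdlib Require Import Lia Lra.
From Coquelicot Require Derive.
From mathcomp Require all_boot all_algebra Rstruct zify.

(* Every element f of either kernel is affine on each edge (its
   second derivative vanishes, so the mean value theorem applies twice).  For
   such f, Green's identity reads
       sum_n (b_n - a_n) f_n'^2 = - sum_v sum_{x_j in v} f(x_j) (df)(x_j),
   and both the standard/Dirichlet and the anti-standard/Neumann vertex
   conditions make every vertex sum on the right vanish; hence f is constant
   on every edge.
   - st,D: the value 0 at a Dirichlet vertex propagates along edges (constancy)
     and through vertices (continuity), so on a connected graph f = 0.
   - a/st,N: f is determined by its edge constants c in R^E, subject only to
     c *m N = 0, where N is the signless incidence matrix of the edges against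
     the vertices outside B.  A row vector y with y *m N^T = 0 vanishes outside
     B (the zero value at a vertex of B propagates with alternating sign), so
     rank N = V - |B| and the kernel has dimension E - V + |B| = beta + |B| - 1. *)

(* The development uses MathComp notations, which redefine e.g. [<] on nat;
   it is enclosed in a module so that the main theorem keeps the Stdlib
   reading of its statement. *)
Module MetricGraphKernels.
Import all_boot all_algebra Rstruct zify.
Import GRing.Theory Num.Theory.
Open Scope R_scope.

Lemma continuity_of_derivative (g : R -> R) x l :
  derivable_pt_lim g x l -> continuity_pt g x.
Proof. by move=> Hg; apply: derivable_continuous_pt; exists l. Qed.

Lemma harmonic_slope_const {a b g dg} : edge_harmonic a b g dg ->
  forall x, a <= x <= b -> dg x = dg a.
Proof.
move=> [_ [Hdd Hd0]] x Hx.
have [->|Hxa] := Req_dec x a; first by [].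
destruct (Derive.MVT_gen dg a x (fun _ => 0)) as [c [_ Hc]].
- move=> y Hy; apply/Derive.is_derive_Reals/Hd0.
  by move: Hy; rewrite /Rmin /Rmax; case: Rle_dec; lra.
- by move=> y _; have [d2 Hd2] := Hdd y; exact: continuity_of_derivative Hd2.
- lra.
Qed.

Lemma harmonic_affine {a b g dg} : edge_harmonic a b g dg ->
  forall x, a <= x <= b -> g x = g a + dg a * (x - a).
Proof.
move=> Hh x Hx; have [Hd _] := Hh.
destruct (Derive.MVT_gen g a x dg) as [c [Hc Hgc]].
- by move=> y _; apply/Derive.is_derive_Reals/Hd.
- by move=> y _; exact: continuity_of_derivative (Hd y).
rewrite (harmonic_slope_const Hh) in Hgc; first lra.
by move: Hc; rewrite /Rmin /Rmax; case: Rle_dec; lra.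
Qed.

Lemma constant_harmonic a b (c : R) : edge_harmonic a b (fun _ => c) (fun _ => 0).
Proof.
split; [|split] => [x|x|x _]; last exact: derivable_pt_lim_const.
- exact: derivable_pt_lim_const.
- by exists 0; exact: derivable_pt_lim_const.
Qed.

Lemma even_double n : Nat.even (2 * n) = true.
Proof. by apply/Nat.even_spec; exists n. Qed.

Lemma even_double_succ n : Nat.even (2 * n + 1) = false.
Proof. exact: Nat.even_odd. Qed.

Lemma endval_left a b f n : endval a b f (2 * n) = f n (a n).
Proof. by rewrite /endval even_double Nat.div2_double. Qed.

Lemma endval_right a b f n : endval a b f (2 * n + 1) = f n (b n).
Proof. by rewrite /endval even_double_succ addn1 Nat.div2_succ_double. Qed.

Lemma endder_left a b df n : endder a b df (2 * n) = df n (a n).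
Proof. by rewrite /endder even_double Nat.div2_double. Qed.

Lemma endder_right a b df n : endder a b df (2 * n + 1) = - df n (b n).
Proof. by rewrite /endder even_double_succ addn1 Nat.div2_succ_double. Qed.

Lemma endder_zero a b j : endder a b (fun _ _ => 0) j = 0.
Proof. by rewrite /endder; case: Nat.even; rewrite ?Ropp_0. Qed.

Lemma sumR_big (l : list nat) (F : nat -> R) : sumR l F = (\sum_(j <- l) F j)%R.
Proof. by elim: l => [|x l IH]; rewrite ?big_nil // big_cons -IH. Qed.

Lemma filter_list_seq (p : pred nat) (l : list nat) : List.filter p l = filter p l.
Proof. by elim: l => [|x l IH] //=; rewrite IH. Qed.

Lemma seq_iota m n : List.seq m n = iota m n.
Proof. by elim: n m => [|n IH] m //=; rewrite IH. Qed.

Lemma eqb_eqn x y : Nat.eqb x y = (x == y).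
Proof. by case: Nat.eqb_spec => [->|/eqP/negbTE]; rewrite ?eqxx. Qed.

Lemma sumR_seq d (F : nat -> R) : sumR (List.seq 0 d) F = (\sum_(i < d) F i)%R.
Proof. by rewrite sumR_big seq_iota -(big_mkord xpredT) /index_iota subn0. Qed.

Lemma sumR_endpoints E vtx v (h : nat -> R) :
  sumR (endpoints_of E vtx v) h = (\sum_(0 <= j < 2 * E | vtx j == v) h j)%R.
Proof.
rewrite sumR_big /endpoints_of filter_list_seq seq_iota big_filter.
by rewrite /index_iota subn0; apply: eq_bigl => j; rewrite eqb_eqn.
Qed.

Lemma in_endpoints E vtx v j :
  In j (endpoints_of E vtx v) <-> (j < 2 * E)%N /\ vtx j = v.
Proof. rewrite /endpoints_of filter_In in_seq Nat.eqb_eq; lia. Qed.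

Lemma sum_endpoints_by_edge E (h : nat -> R) :
  (\sum_(0 <= j < 2 * E) h j = \sum_(n < E) (h (2 * n)%N + h (2 * n + 1)%N))%R.
Proof.
elim: E => [|E IH]; first by rewrite muln0 big_geq // big_ord0.
by rewrite big_ord_recr -IH mulnS add2n !big_nat_recr //= -addrA addn1.
Qed.

Lemma sum_endpoints_by_vertex E V vtx (h : nat -> R) :
  (forall j, (j < 2 * E)%N -> (vtx j < V)%N) ->
  (\sum_(0 <= j < 2 * E) h j = \sum_(v < V) sumR (endpoints_of E vtx v) h)%R.
Proof.
move=> vtxV; under [RHS]eq_bigr => v _ do rewrite sumR_endpoints big_mkcond big_mkord.
rewrite exchange_big big_mkord; apply: eq_bigr => j _ /=.
by rewrite -big_mkcond (big_pred1 (Ordinal (vtxV j (ltn_ord j)))) // => v; rewrite eq_sym.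
Qed.

Lemma sumR_cons x l (F : nat -> R) : sumR (x :: l) F = F x + sumR l F.
Proof. by []. Qed.

Lemma sumR_factor (l : list nat) (c : R) (F G : nat -> R) :
  (forall j, In j l -> F j = c) -> sumR l (fun j => F j * G j) = c * sumR l G.
Proof.
elim: l => [|x l IH] Fc; first by rewrite /sumR /=; ring.
rewrite !sumR_cons Fc ?IH; first ring.
- by move=> j lj; apply: Fc; right.
- by left.
Qed.

(* The vertex-sum form of both kinds of vertex conditions: a factor that is
   constant over the vertex times a factor summing to zero over it. *)
Lemma sumR_const_mul (l : list nat) (F G : nat -> R) :
  (forall i j, In i l -> In j l -> F i = F j) -> sumR l G = 0 ->
  sumR l (fun j => F j * G j) = 0.
Proof.
case: l => [|j0 l] // Fconst G0.
by rewrite (@sumR_factor _ (F j0)) ?G0 ?Rmult_0_r // => j lj; apply: Fconst => //; left.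
Qed.

Lemma sumR_zero_terms (l : list nat) (F : nat -> R) :
  (forall j, In j l -> F j = 0) -> sumR l F = 0.
Proof.
elim: l => [|x l IH] F0 //.
rewrite sumR_cons IH => [|j lj]; last by apply: F0; right.
by rewrite F0 ?Rplus_0_r //; left.
Qed.

Lemma metric_graph_edge_pos {E V a b vtx} : is_metric_graph E V a b vtx ->
  forall n, (n < E)%N -> a n < b n.
Proof. by move=> [ab _] n /ltP; exact: ab. Qed.

Lemma metric_graph_vtx_range {E V a b vtx} : is_metric_graph E V a b vtx ->
  forall j, (j < 2 * E)%N -> (vtx j < V)%N.
Proof. by move=> [_ [vtxV _]] j /ltP /vtxV /ltP. Qed.

Lemma connected_propagation {E V vtx} (P : nat -> Prop) {v0} :
  connected E V vtx -> (v0 < V)%N -> P v0 ->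
  (forall n, (n < E)%N -> P (vtx (2 * n)%N) -> P (vtx (2 * n + 1)%N)) ->
  (forall n, (n < E)%N -> P (vtx (2 * n + 1)%N) -> P (vtx (2 * n)%N)) ->
  forall v, (v < V)%N -> P v.
Proof.
move=> conn v0V Pv0 fwd bwd v vV.
elim: (conn v0 v (ltP v0V) (ltP vV)) => // w x n _ Pw /ltP nE.
by case=> [[Ew <-]|[Ew <-]]; [apply: fwd | apply: bwd]; rewrite // Ew.
Qed.

Definition edgewise_constant (E : nat) (a b : nat -> R) (f : nat -> R -> R) : Prop :=
  forall n, (n < E)%N -> forall x, a n <= x <= b n -> f n x = f n (a n).

Lemma edgewise_constant_ends {E a b f} : (forall n, (n < E)%N -> a n < b n) ->
  edgewise_constant E a b f ->
  forall n, (n < E)%N -> endval a b f (2 * n + 1) = endval a b f (2 * n).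
Proof.
move=> ab fconst n nE; rewrite endval_left endval_right fconst //.
by have := ab _ nE; lra.
Qed.

Section GreenIdentity.
Variables (E V : nat) (a b : nat -> R) (vtx : nat -> nat) (f df : nat -> R -> R).
Hypothesis edge_pos : forall n, (n < E)%N -> a n < b n.
Hypothesis vtx_range : forall j, (j < 2 * E)%N -> (vtx j < V)%N.
Hypothesis harmonic : forall n, (n < E)%N -> edge_harmonic (a n) (b n) (f n) (df n).

Definition flux (j : nat) : R := endval a b f j * endder a b df j.

Definition edge_energy (n : nat) : R := (b n - a n) * (df n (a n) * df n (a n)).

Lemma edge_flux n : (n < E)%N -> flux (2 * n) + flux (2 * n + 1) = - edge_energy n.
Proof.
move=> nE; have ab := edge_pos _ nE; have Hh := harmonic _ nE.
rewrite /flux /edge_energy endval_left endval_right endder_left endder_right.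
have bn : a n <= b n <= b n by lra.
by rewrite (harmonic_affine Hh _ bn) (harmonic_slope_const Hh _ bn); ring.
Qed.

Lemma green_identity :
  (\sum_(v < V) sumR (endpoints_of E vtx v) flux = - \sum_(n < E) edge_energy n)%R.
Proof.
rewrite -sum_endpoints_by_vertex // sum_endpoints_by_edge -sumrN.
by apply: eq_bigr => n _; exact: edge_flux.
Qed.

(* The energies are nonnegative and sum to zero, so every slope vanishes. *)
Lemma slopes_vanish :
  (forall v, (v < V)%N -> sumR (endpoints_of E vtx v) flux = 0) ->
  forall n, (n < E)%N -> df n (a n) = 0.
Proof.
move=> no_flux n nE.
have energy0 : (\sum_(m < E) edge_energy m = 0)%R.
  apply: oppr_inj; rewrite oppr0 -green_identity.
  by apply: big1 => v _; exact: no_flux.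
have energy_ge0 (m : 'I_E) : xpredT m -> (0 <= edge_energy m)%R.
  move=> _; apply/RleP; apply: Rmult_le_pos; last exact: Rle_0_sqr.
  by have := edge_pos _ (ltn_ord m); lra.
have := @psumr_eq0P _ _ _ _ energy_ge0 energy0 (Ordinal nE) isT.
rewrite /edge_energy /= => /Rmult_integral [|/Rmult_integral []//].
by have := edge_pos _ nE; lra.
Qed.

Lemma edgewise_constant_of_flux :
  (forall v, (v < V)%N -> sumR (endpoints_of E vtx v) flux = 0) ->
  edgewise_constant E a b f.
Proof.
move=> no_flux n nE x Hx.
by rewrite (harmonic_affine (harmonic _ nE)) // slopes_vanish //; ring.
Qed.

End GreenIdentity.

Section DirichletKernel.
Variables (E V : nat) (a b : nat -> R) (vtx : nat -> nat) (B : nat -> bool).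
Hypothesis graph : is_metric_graph E V a b vtx.

Lemma ker_stD_edgewise_constant {f} :
  ker_stD E V a b vtx B f -> edgewise_constant E a b f.
Proof.
move=> [df [harm vcond]].
apply: (@edgewise_constant_of_flux E V a b vtx f df (metric_graph_edge_pos graph)
          (metric_graph_vtx_range graph)) => [n /ltP|v /ltP vV].
  exact: harm.
rewrite /flux; move: (vcond v vV); case: (B v) => [dirichlet | [same_value kirchhoff]].
- by apply: sumR_zero_terms => j /dirichlet ->; ring.
- exact: sumR_const_mul.
Qed.

Lemma ker_stD_vertex_values {f w j0} : ker_stD E V a b vtx B f -> (w < V)%N ->
  In j0 (endpoints_of E vtx w) -> endval a b f j0 = 0 ->
  forall j, In j (endpoints_of E vtx w) -> endval a b f j = 0.
Proof.
move=> [df [_ vcond]] /ltP wV j0w fj0 j jw; move: (vcond w wV).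
by case: (B w) => [dirichlet | [same_value _]]; [exact: dirichlet | rewrite (same_value j j0)].
Qed.

Lemma ker_stD_trivial f v0 : connected E V vtx -> B v0 -> (v0 < V)%N ->
  ker_stD E V a b vtx B f -> eq_on_edges E a b f (fun _ _ => 0).
Proof.
move=> conn Bv0 v0V fker.
have vtxV := metric_graph_vtx_range graph.
have ends := edgewise_constant_ends (metric_graph_edge_pos graph)
               (ker_stD_edgewise_constant fker).
pose vanishes w := forall j, In j (endpoints_of E vtx w) -> endval a b f j = 0.
have transfer (i k : nat) : endval a b f i = endval a b f k ->
    (i < 2 * E)%N -> (k < 2 * E)%N -> vanishes (vtx i) -> vanishes (vtx k).
  move=> fik iE kE vi; apply: (ker_stD_vertex_values (j0 := k)) => //.
  - exact: vtxV.
  - exact/in_endpoints.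
  - by rewrite -fik; apply: vi; apply/in_endpoints.
have all_vanish : forall w, (w < V)%N -> vanishes w.
  apply: (connected_propagation vanishes conn v0V) => [|n nE|n nE].
  - have [df [_ vcond]] := fker; move: (vcond v0 (ltP v0V)); rewrite Bv0; exact.
  - by apply: transfer; [rewrite ends | lia | lia].
  - by apply: transfer; [rewrite ends | lia | lia].
move=> n x /ltP nE xn; rewrite (ker_stD_edgewise_constant fker) // -(endval_left a b).
by apply: (all_vanish (vtx (2 * n)%N)); [apply: vtxV; lia | apply/in_endpoints; split => //; lia].
Qed.

End DirichletKernel.

Section Incidence.
Local Open Scope ring_scope.
Variables (E V : nat) (vtx : nat -> nat) (B : nat -> bool).

Definition incidence : 'M[R]_(E, V) :=
  \matrix_(n, v) (if B v then 0
                  else ((vtx (2 * n)%N == v) + (vtx (2 * n + 1)%N == v))%N%:R).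

Lemma vertex_sum_incidence (v : 'I_V) (g h : nat -> R) : B v = false ->
  (forall n, (n < E)%N -> h (2 * n)%N = g n /\ h (2 * n + 1)%N = g n) ->
  sumR (endpoints_of E vtx v) h = \sum_(n < E) g n * incidence n v.
Proof.
move=> Bv hg; rewrite sumR_endpoints big_mkcond sum_endpoints_by_edge.
apply: eq_bigr => n _; rewrite mxE Bv natrD mulrDr.
have [-> ->] := hg n (ltn_ord n).
by case: eqP; case: eqP; rewrite ?mulr1 ?mulr0 ?addr0 ?add0r.
Qed.

Definition free_values (y : 'rV[R]_V) (w : nat) : R :=
  \sum_(v < V) if B v then 0 else y 0 v * (w == v)%:R.

Lemma free_values_vertex y (v : 'I_V) : free_values y v = if B v then 0 else y 0 v.
Proof.
rewrite /free_values (bigD1 v) //= eqxx mulr1 big1 ?addr0 // => u /negbTE uv.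
by case: (B u); rewrite // eq_sym [_ == _]uv mulr0.
Qed.

Lemma incidence_tr_entry y (n : 'I_E) : (y *m incidence^T) 0 n =
  free_values y (vtx (2 * n)%N) + free_values y (vtx (2 * n + 1)%N).
Proof.
rewrite !mxE /free_values -big_split /=; apply: eq_bigr => v _.
by rewrite !mxE; case: (B v); rewrite ?mulr0 ?addr0 // natrD mulrDr.
Qed.

Variable v0 : nat.
Hypothesis conn : connected E V vtx.
Hypothesis Bv0 : B v0.
Hypothesis v0V : (v0 < V)%N.

(* The free values vanish at v0 and, by the equations of y *m N^T = 0, the
   free values at the two ends of each edge are opposite. *)
Lemma left_kernel_supported_on_B (y : 'rV[R]_V) : y *m incidence^T = 0 ->
  forall v : 'I_V, B v = false -> y 0 v = 0.
Proof.
move=> yN v Bv; have := free_values_vertex y v; rewrite Bv => <-.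
apply: (connected_propagation (fun w => free_values y w = 0) conn v0V _ _ _ v (ltn_ord v)).
- by rewrite -[v0]/(val (Ordinal v0V)) free_values_vertex /= Bv0.
- move=> n nE /= yw; have := incidence_tr_entry y (Ordinal nE).
  by rewrite yN mxE /= yw add0r => <-.
- move=> n nE /= yw; have := incidence_tr_entry y (Ordinal nE).
  by rewrite yN mxE /= yw addr0 => <-.
Qed.

Definition B_vertices : {pred 'I_V} := fun v => B v.

Definition B_selection : 'M[R]_(#|B_vertices|, V) :=
  \matrix_(i, v) (v == enum_val i)%:R.

Lemma B_selection_incidence : B_selection *m incidence^T = 0.
Proof.
apply/matrixP => i n; rewrite !mxE; apply: big1 => v _.
rewrite !mxE; case: eqP => [->|_]; last by rewrite mul0r.
by have := enum_valP i; rewrite unfold_in => ->; rewrite mulr0.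
Qed.

Lemma rank_B_selection : \rank B_selection = #|B_vertices|.
Proof.
have orthonormal : B_selection *m B_selection^T = 1%:M.
  apply/matrixP => i j; rewrite !mxE (bigD1 (enum_val i)) //= big1 ?addr0.
  - by rewrite !mxE eqxx mul1r (inj_eq enum_val_inj).
  - by move=> v vi; rewrite !mxE (negbTE vi) mul0r.
apply/eqP; rewrite eqn_leq rank_leq_row /=.
by have := mxrankM_maxl B_selection B_selection^T; rewrite orthonormal mxrank1.
Qed.

Lemma left_kernel_sub_B_selection (y : 'rV[R]_V) :
  y *m incidence^T = 0 -> (y <= B_selection)%MS.
Proof.
move=> yN; have -> : y = \sum_(v : 'I_V | B v) y 0 v *: delta_mx 0 v.
  apply/rowP => u; rewrite summxE; under eq_bigr do rewrite !mxE eqxx /=.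
  case Bu: (B u).
  - rewrite (bigD1 u) //= eqxx mulr1 big1 ?addr0 // => v /andP [_ vu].
    by rewrite eq_sym (negbTE vu) mulr0.
  - rewrite left_kernel_supported_on_B // big1 // => v Bv.
    by case: eqP Bv Bu => [->->|]; rewrite ?mulr0.
apply: summx_sub => v Bv; apply: scalemx_sub.
have Bv' : v \in B_vertices by rewrite unfold_in.
have <- : row (enum_rank_in Bv' v) B_selection = delta_mx 0 v.
  by apply/rowP => u; rewrite !mxE (enum_rankK_in Bv' Bv').
exact: row_sub.
Qed.

(* The left kernel of N is exactly the row space of B_selection. *)
Lemma rank_incidence : (\rank incidence + #|B_vertices| = V)%N.
Proof.
have left_kernel : \rank (kermx incidence^T) = #|B_vertices|.
  apply/eqP; rewrite eqn_leq -{1 2}rank_B_selection; apply/andP; split.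
  - apply: mxrankS; apply/row_subP => i.
    by apply: left_kernel_sub_B_selection; apply/sub_kermxP; exact: row_sub.
  - by apply: mxrankS; apply/sub_kermxP; exact: B_selection_incidence.
have := mxrank_ker incidence^T; rewrite left_kernel mxrank_tr.
by have := rank_leq_row incidence^T; rewrite mxrank_tr; lia.
Qed.

End Incidence.

Lemma card_B_vertices V B : card_B V B = #|B_vertices V B|.
Proof.
rewrite /card_B filter_list_seq seq_iota -val_enum_ord cardE /enum_mem.
change (length ?s) with (size s); rewrite !size_filter count_map count_filter.
by apply: eq_count => v; rewrite /= andbT.
Qed.

(* A space K of functions on the edges whose elements are exactly (up to
   equality on the edges) the edgewise constants c with c *m M = 0 has
   dimension \rank (kermx M); a basis is read off the rows of a basis of
   kermx M. *)

Section EdgewiseConstantSpaces.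
Local Open Scope ring_scope.

Definition mx_fun {p q} (M : 'M[R]_(p, q)) (i n : nat) : R :=
  if insub i is Some i' then if insub n is Some n' then M i' n' else 0 else 0.

Lemma mx_fun_ord {p q} (M : 'M[R]_(p, q)) (i : 'I_p) (n : 'I_q) : mx_fun M i n = M i n.
Proof. by rewrite /mx_fun !valK. Qed.

Lemma has_dim_edgewise_constants E p (a b : nat -> R) (M : 'M[R]_(E, p))
    (K : (nat -> R -> R) -> Prop) :
  (forall n, (n < E)%N -> Rle (a n) (b n)) ->
  (forall g : nat -> R, (\row_(n < E) g n) *m M = 0 -> K (fun n _ => g n)) ->
  (forall f, K f -> edgewise_constant E a b f /\ (\row_(n < E) f n (a n)) *m M = 0) ->
  has_dim E a b K (\rank (kermx M)).
Proof.
move=> ab constants_in_K K_constants.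
set r := \rank (kermx M); set rb := row_base (kermx M).
have rb_ker : (rb <= kermx M)%MS by rewrite /rb eq_row_base.
have lincomb_entry (coef : nat -> R) (n : 'I_E) x :
    lincomb r coef (fun i n _ => mx_fun rb i n) n x = ((\row_(i < r) coef i) *m rb) 0 n.
  rewrite /lincomb sumR_seq mxE; apply: eq_bigr => i _.
  by rewrite mxE (mx_fun_ord rb i n).
exists (fun i n _ => mx_fun rb i n); split; [|split].
- move=> i /ltP ir; apply: constants_in_K; apply/sub_kermxP.
  have -> : \row_(n < E) mx_fun rb i n = row (Ordinal ir) rb.
    by apply/rowP => n; rewrite [LHS]mxE [RHS]mxE (mx_fun_ord rb (Ordinal ir) n).
  exact: submx_trans (row_sub _ _) rb_ker.
- move=> f /K_constants [fconst fM].
  have : (\row_(n < E) f n (a n) <= rb)%MS by rewrite /rb eq_row_base; apply/sub_kermxP.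
  case/submxP => c crb; exists (mx_fun c 0) => n x /ltP nE xn.
  rewrite fconst // (lincomb_entry _ (Ordinal nE)).
  have -> : \row_(i < r) mx_fun c 0 i = c by apply/rowP => i; rewrite mxE (mx_fun_ord c 0 i).
  by rewrite -crb mxE.
- move=> coef coef0 i /ltP ir.
  have crb : (\row_(i < r) coef i) *m rb = 0 *m rb.
    rewrite mul0mx; apply/rowP => n; rewrite -(lincomb_entry coef n (a n)) mxE.
    by rewrite coef0 //; [apply/ltP | have := ab n (ltn_ord n); lra].
  have := row_free_inj (row_base_free (kermx M)) crb.
  by move/rowP/(_ (Ordinal ir)); rewrite !mxE.
Qed.

End EdgewiseConstantSpaces.

Section AntiStandardKernel.
Variables (E V : nat) (a b : nat -> R) (vtx : nat -> nat) (B : nat -> bool).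
Hypothesis graph : is_metric_graph E V a b vtx.

Lemma ker_astN_edgewise_constant {f} :
  ker_astN E V a b vtx B f -> edgewise_constant E a b f.
Proof.
move=> [df [harm vcond]].
apply: (@edgewise_constant_of_flux E V a b vtx f df (metric_graph_edge_pos graph)
          (metric_graph_vtx_range graph)) => [n /ltP|v /ltP vV].
  exact: harm.
rewrite /flux; move: (vcond v vV); case: (B v) => [neumann | [sum0 der_equal]].
- by apply: sumR_zero_terms => j /neumann ->; ring.
- rewrite /sumR (map_ext _ (fun j => endder a b df j * endval a b f j)) => [|j].
    exact: sumR_const_mul.
  exact: Rmult_comm.
Qed.

Lemma ker_astN_incidence {f} : ker_astN E V a b vtx B f ->
  ((\row_(n < E) f n (a n)) *m incidence E V vtx B = 0)%R.
Proof.
move=> fker; have fconst := ker_astN_edgewise_constant fker.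
have ab := metric_graph_edge_pos graph.
have [df [_ vcond]] := fker.
apply/rowP => v; rewrite [LHS]mxE [RHS]mxE; under eq_bigr do rewrite [X in (X * _)%R]mxE.
case Bv: (B v).
- by apply: big1 => n _; rewrite mxE Bv mulr0.
- move: (vcond v (ltP (ltn_ord v))); rewrite Bv => -[sum0 _].
  rewrite -(vertex_sum_incidence E V vtx B v (fun n => f n (a n)) (endval a b f) Bv) // => n nE.
  by rewrite (edgewise_constant_ends ab fconst _ nE) endval_left.
Qed.

Lemma constants_in_ker_astN (g : nat -> R) :
  ((\row_(n < E) g n) *m incidence E V vtx B = 0)%R ->
  ker_astN E V a b vtx B (fun n _ => g n).
Proof.
move=> gN; exists (fun _ _ => 0); split=> [n _|v /ltP vV]; first exact: constant_harmonic.
case Bv: (B v); first by move=> j _; exact: endder_zero.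
split; last by move=> i j _ _; rewrite !endder_zero.
rewrite (vertex_sum_incidence E V vtx B (Ordinal vV) g) //.
  transitivity (((\row_(n < E) g n) *m incidence E V vtx B)%R ord0 (Ordinal vV)).
    by rewrite [RHS]mxE; apply: eq_bigr => n _; rewrite !mxE.
  by rewrite gN mxE.
by move=> n _; rewrite endval_left endval_right.
Qed.

End AntiStandardKernel.

Theorem ker_stD_dim_zero {E V a b vtx B v0} :
  is_metric_graph E V a b vtx -> connected E V vtx -> B v0 = true -> (v0 < V)%coq_nat ->
  has_dim E a b (ker_stD E V a b vtx B) 0.
Proof.
move=> graph conn Bv0 /ltP v0V.
exists (fun _ _ _ => 0); split; [by move=> i /ltP | split; last by move=> c _ i /ltP].
move=> f fker; exists (fun _ => 0).
exact: (@ker_stD_trivial E V a b vtx B graph f v0 conn Bv0 v0V fker).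
Qed.

Theorem ker_astN_dim {E V a b vtx B v0} :
  is_metric_graph E V a b vtx -> connected E V vtx -> B v0 = true -> (v0 < V)%coq_nat ->
  exists d, has_dim E a b (ker_astN E V a b vtx B) d /\ (d + V = E + card_B V B)%coq_nat.
Proof.
move=> graph conn Bv0 /ltP v0V.
exists (\rank (kermx (incidence E V vtx B))); split.
- apply: has_dim_edgewise_constants => [n nE | g | f fker].
  + by have := metric_graph_edge_pos graph n nE; lra.
  + exact: constants_in_ker_astN.
  + split; [exact: (@ker_astN_edgewise_constant E V a b vtx B graph f fker)
           | exact: (@ker_astN_incidence E V a b vtx B graph f fker)].
- have := rank_incidence E V vtx B v0 conn Bv0 v0V.
  have := rank_leq_row (incidence E V vtx B).
  by rewrite mxrank_ker card_B_vertices; lia.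
Qed.

End MetricGraphKernels.

Theorem mainTheorem8 (E V : nat) (a b : nat -> R) (vtx : nat -> nat) (B : nat -> bool) :
  is_metric_graph E V a b vtx ->
  connected E V vtx ->
  bipartite E vtx ->
  (forall v, B v = true -> (v < V)%nat /\ degree E vtx v = 1%nat) ->
  (exists v, B v = true) ->
  has_dim E a b (ker_stD E V a b vtx B) 0 /\
  (exists d : nat,
     has_dim E a b (ker_astN E V a b vtx B) d /\
     Z.of_nat d = (betti E V + Z.of_nat (card_B V B) - 1)%Z).
Proof.
  intros graph conn _ boundary [v0 Bv0].
  destruct (boundary v0 Bv0) as [v0V _].
  split.
  - exact (MetricGraphKernels.ker_stD_dim_zero graph conn Bv0 v0V).
  - destruct (MetricGraphKernels.ker_astN_dim graph conn Bv0 v0V) as [d [dim count]].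
    exists d; split; [exact dim | unfold betti; lia].
Qed.
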